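(* There is a unique function $\phi\colon\mathrm{SL}_2(\mathbb{Z})\times\mathrm{SL}_2(\mathbb{Z})\to\frac{1}{12}\mathbb{Z}$ which is left $\mathrm{SL}_2(\mathbb{Z})$-invariant ($\phi(h\gamma_1,h\gamma_2)=\phi(\gamma_1,\gamma_2)$) and satisfies $$\phi(\gamma_1,\gamma_2)+\phi(\gamma_2,\gamma_3)-\phi(\gamma_1,\gamma_3)=\delta(\gamma_1\ell_0,\gamma_2\ell_0,\gamma_3\ell_0)$$ for all $\gamma_1,\gamma_2,\gamma_3\in\mathrm{SL}_2(\mathbb{Z})$.
   Context: $S^1=(\mathbb{R}^2\setminus\{0\})/\mathbb{R}_+$ is the circle of rays in $\mathbb{R}^2$ (row vectors) with the standard orientation. $\ell_0$ is the ray $\mathbb{R}_+(-1,0)$, and $\gamma\in\mathrm{SL}_2(\mathbb{Z})$ acts on rays by $\mathbb{R}_+\nu\mapsto\mathbb{R}_+\nu\gamma^{-1}$. For rays $\ell_1,\ell_2,\ell_3$, $\delta(\ell_1,\ell_2,\ell_3)=0$ if $\ell_2$ lies on the closed counterclockwise arc from $\ell_1$ to $\ell_3$ (endpoints included), and $\delta(\ell_1,\ell_2,\ell_3)=1$ otherwise. *)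

From mathcomp Require Import all_boot all_order all_algebra.
Set Implicit Arguments. Unset Strict Implicit. Unset Printing Implicit Defensive.
Import Order.TTheory GRing.Theory Num.Theory.
Local Open Scope ring_scope.

(* Rays are represented by nonzero integer row vectors (all rays occurring here,
   gamma l0 with gamma in SL2(Z), have integer representatives).  Everything
   below is invariant under positive rescaling, so it is a function of rays. *)

Definition cross (u v : 'rV[int]_2) : int := u 0 0 * v 0 1 - u 0 1 * v 0 0.
Definition dotp (u v : 'rV[int]_2) : int := u 0 0 * v 0 0 + u 0 1 * v 0 1.

(* Position of the ray of x on the circle measured counterclockwise from the
   ray of u: 0 = angle 0, 1 = angle in (0,pi), 2 = angle pi, 3 = angle in (pi,2pi). *)
Definition sector (u x : 'rV[int]_2) : nat :=
  if cross u x > 0 then 1%N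
  else if cross u x < 0 then 3%N
  else if dotp u x > 0 then 0%N else 2%N.

(* ray(v) lies on the closed counterclockwise arc from ray(u) to ray(w)
   (i.e. the ccw angle from u to v is <= the ccw angle from u to w, angles
   taken in [0, 2pi)); for u = w the arc is the single ray {u}. *)
Definition on_ccw_arc (u v w : 'rV[int]_2) : bool :=
  (sector u v < sector u w)%N || ((sector u v == sector u w) && (cross v w >= 0)).

Definition delta (u v w : 'rV[int]_2) : int :=
  if on_ccw_arc u v w then 0 else 1.

Definition l0 : 'rV[int]_2 := \row_(j < 2) (if j == 0 then -1 else 0).

(* action of gamma on rays: R_+ nu |-> R_+ nu gamma^{-1} *)
Definition act (g : 'M[int]_2) (nu : 'rV[int]_2) : 'rV[int]_2 := nu *m invmx g.

Definition SL2Z (g : 'M[int]_2) : Prop := \det g = 1.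

Definition in_twelfth_Z (q : rat) : Prop := exists z : int, q = z%:~R / 12%:R.

Definition phi_spec (phi : 'M[int]_2 -> 'M[int]_2 -> rat) : Prop :=
  (forall g1 g2, SL2Z g1 -> SL2Z g2 -> in_twelfth_Z (phi g1 g2)) /\
  (forall h g1 g2, SL2Z h -> SL2Z g1 -> SL2Z g2 ->
     phi (h *m g1) (h *m g2) = phi g1 g2) /\
  (forall g1 g2 g3, SL2Z g1 -> SL2Z g2 -> SL2Z g3 ->
     phi g1 g2 + phi g2 g3 - phi g1 g3
       = (delta (act g1 l0) (act g2 l0) (act g3 l0))%:~R).

From mathcomp Require Import all_boot all_order all_algebra.
From mathcomp Require Import zify ring lra.
Import Order.TTheory GRing.Theory Num.Theory.
Set Implicit Arguments. Unset Strict Implicit. Unset Printing Implicit Defensive.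
Local Open Scope ring_scope.

(* Put c(a, b) = delta(l0, a l0, ab l0).  By invariance of delta,
   phi(g1, g2) = F(g1^-1 g2) / 12 is a solution as soon as F : SL2(Z) -> Z
   satisfies F(ab) = F(a) + F(b) - 12 c(a, b).
   1. Geometry: delta is invariant under orientation-preserving linear maps
      and positive rescalings, and on rays it is the coboundary of
      delta0(x, y) = delta(l0, x, y); hence c is a 2-cocycle.
   2. Words in S (order 4) and B (order 6): [wval] accumulates the weights
      F(S) = 3, F(B) = 2 and the defects -12 c; it obeys the law above for
      concatenation of words.
   3. Normal forms B^i m S^j (i < 6, j < 2, m in the monoid generated by T and L)
      together with the defining relations of SL2(Z) show that [wval] only
      depends on the matrix of a word; S and B generate SL2(Z), so F can be
      taken as [wval] of the normal form.
   4. Uniqueness: the difference of two solutions yields a homomorphism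
      SL2(Z) -> Q, which is trivial since S and B have finite order. *)


Definition vec := (int * int)%type.

Record mat22 := Mat22 { e00 : int; e01 : int; e10 : int; e11 : int }.

Definition det22 (g : mat22) : int := e00 g * e11 g - e01 g * e10 g.

Definition vmul (v : vec) (g : mat22) : vec :=
  (v.1 * e00 g + v.2 * e10 g, v.1 * e01 g + v.2 * e11 g).

Definition nonzero (v : vec) : Prop := v.1 <> 0 \/ v.2 <> 0.

Definition vcross (u v : vec) : int := u.1 * v.2 - u.2 * v.1.
Definition vdot (u v : vec) : int := u.1 * v.1 + u.2 * v.2.
Definition vsector (u x : vec) : nat :=
  if vcross u x > 0 then 1%N
  else if vcross u x < 0 then 3%N
  else if vdot u x > 0 then 0%N else 2%N.
Definition varc (u v w : vec) : bool :=
  (vsector u v < vsector u w)%N || ((vsector u v == vsector u w) && (vcross v w >= 0)).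
Definition vdelta (u v w : vec) : int := if varc u v w then 0 else 1.

Definition ray0 : vec := (-1, 0).

(* delta with first argument fixed to the base ray; the coboundary formula
   below writes delta as the coboundary of this 1-cochain. *)
Definition delta0 (x y : vec) : int := vdelta ray0 x y.

Lemma vsectorP u1 u2 x1 x2 :
  (vsector (u1,u2) (x1,x2) = 0%N /\ u1 * x2 - u2 * x1 = 0 /\ 0 < u1 * x1 + u2 * x2) \/
  (vsector (u1,u2) (x1,x2) = 1%N /\ 0 < u1 * x2 - u2 * x1) \/
  (vsector (u1,u2) (x1,x2) = 2%N /\ u1 * x2 - u2 * x1 = 0 /\ u1 * x1 + u2 * x2 <= 0) \/
  (vsector (u1,u2) (x1,x2) = 3%N /\ u1 * x2 - u2 * x1 < 0).
Proof.
rewrite /vsector /vcross /vdot /=.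
case: ifP => h1; first by right; left.
case: ifP => h2; first by right; right; right.
case: ifP => h3; [left | right; right; left]; lia.
Qed.

Ltac sector_cases u1 u2 x1 x2 :=
  let H1 := fresh "h" in let H2 := fresh "h" in
  destruct (vsectorP u1 u2 x1 x2) as
    [[-> [H1 H2]]|[[-> H1]|[[-> [H1 H2]]|[-> H1]]]].

Lemma sqr_pos (x : int) : x != 0 -> 0 < x * x.
Proof. by case: (ltrgtP x 0) => // h _; nia. Qed.

Lemma vdot_self_gt0 u : nonzero u -> 0 < vdot u u.
Proof.
case: u => u1 u2; rewrite /nonzero /vdot /=.
have s1 : 0 <= u1 * u1 by rewrite -expr2 sqr_ge0.
have s2 : 0 <= u2 * u2 by rewrite -expr2 sqr_ge0.
by case=> /eqP /sqr_pos; lia.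
Qed.

Lemma zero_or_nonzero u : u = (0, 0) \/ nonzero u.
Proof.
case: u => u1 u2; rewrite /nonzero /=.
by case: (u1 =P 0) => [->|]; case: (u2 =P 0) => [->|]; auto.
Qed.

Lemma vmul_nonzero u g : 0 < det22 g -> nonzero u -> nonzero (vmul u g).
Proof.
case: u g => [u1 u2] [a b c d]; rewrite /nonzero /vmul /det22 /= => hd hu.
have h1 : u1 * (a * d - b * c) = d * (u1 * a + u2 * c) - c * (u1 * b + u2 * d) by ring.
have h2 : u2 * (a * d - b * c) = a * (u1 * b + u2 * d) - b * (u1 * a + u2 * c) by ring.
case: (u1 * a + u2 * c =P 0) => hX; last by left.
case: (u1 * b + u2 * d =P 0) => hY; last by right.
rewrite hX hY !mulr0 subr0 in h1 h2.
have hD : a * d - b * c != 0 by lia.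
by case: hu; [move/eqP: h1 | move/eqP: h2]; rewrite mulf_eq0 (negbTE hD) orbF => /eqP.
Qed.

Lemma vcross_vmul u v g : vcross (vmul u g) (vmul v g) = det22 g * vcross u v.
Proof. case: u v g => [u1 u2] [v1 v2] [a b c d]; rewrite /vcross /det22 /=; ring. Qed.

Definition vrot (v : vec) : vec := (- v.2, v.1).

Lemma vdot_vmul_expand u v g :
  vdot u u * vdot (vmul u g) (vmul v g) =
  vdot u v * vdot (vmul u g) (vmul u g) +
  vcross u v * vdot (vmul u g) (vmul (vrot u) g).
Proof. case: u v g => [u1 u2] [v1 v2] [a b c d]; rewrite /vdot /vcross /=; ring. Qed.

Lemma vdot_vmul_gt0 u v g : 0 < det22 g -> vcross u v = 0 ->
  (0 < vdot (vmul u g) (vmul v g)) = (0 < vdot u v).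
Proof.
move=> hd hc; have := vdot_vmul_expand u v g; rewrite hc mul0r addr0.
have [->|hu] := zero_or_nonzero u; first by rewrite /vdot /vmul /= !mul0r !addr0.
have P := vdot_self_gt0 hu; have Q := vdot_self_gt0 (vmul_nonzero hd hu).
by move=> e; apply/idP/idP => h; nia.
Qed.

Lemma vsector_vmul u x g : 0 < det22 g -> vsector (vmul u g) (vmul x g) = vsector u x.
Proof.
move=> hd; rewrite /vsector vcross_vmul.
have [hc|hc|hc] := ltrgtP (vcross u x) 0.
- have -> : (0 < det22 g * vcross u x) = false by apply/negbTE; nia.
  by have -> : det22 g * vcross u x < 0 by nia.
- by have -> : 0 < det22 g * vcross u x by nia.
- by rewrite hc mulr0 ltxx vdot_vmul_gt0.
Qed.

Lemma vdelta_vmul u v w g : 0 < det22 g ->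
  vdelta (vmul u g) (vmul v g) (vmul w g) = vdelta u v w.
Proof.
move=> hd; rewrite /vdelta /varc !vsector_vmul // vcross_vmul.
by have -> : (0 <= det22 g * vcross v w) = (0 <= vcross v w) by apply/idP/idP; nia.
Qed.

Definition vscale (t : int) (v : vec) : vec := (t * v.1, t * v.2).

Lemma vcross_scale t u v :
  vcross (vscale t u) v = t * vcross u v /\ vcross u (vscale t v) = t * vcross u v.
Proof. by rewrite /vcross /=; split; ring. Qed.

Lemma vdot_scale t u v :
  vdot (vscale t u) v = t * vdot u v /\ vdot u (vscale t v) = t * vdot u v.
Proof. by rewrite /vdot /=; split; ring. Qed.

Lemma vsector_scale t u x : 0 < t ->
  vsector (vscale t u) x = vsector u x /\ vsector u (vscale t x) = vsector u x.
Proof.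
move=> ht; have P (b : int) : (0 < t * b) = (0 < b) by apply/idP/idP; nia.
have N (b : int) : (t * b < 0) = (b < 0) by apply/idP/idP; nia.
rewrite /vsector (vcross_scale t u x).1 (vcross_scale t u x).2.
by rewrite (vdot_scale t u x).1 (vdot_scale t u x).2 !P N.
Qed.

Lemma vcross_scale_ge0 t u v : 0 < t -> (0 <= vcross (vscale t u) v) = (0 <= vcross u v).
Proof. by move=> ht; rewrite (vcross_scale t u v).1; apply/idP/idP; nia. Qed.

Lemma vdelta_scale1 t u v w : 0 < t -> vdelta (vscale t u) v w = vdelta u v w.
Proof. by move=> ht; rewrite /vdelta /varc !(vsector_scale _ _ ht).1. Qed.

Lemma vdelta_scale2 t u v w : 0 < t -> vdelta u (vscale t v) w = vdelta u v w.
Proof.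
by move=> ht; rewrite /vdelta /varc !(vsector_scale _ _ ht).2 (vcross_scale_ge0 _ _ ht).
Qed.

(* Indicator of the rays that the quarter turn [vrot] carries across the
   base ray: those in the closed-open quadrant {x <= 0 < y}. *)
Definition quadrant2 (v : vec) : int := if (0 < v.2) && (v.1 <= 0) then 1 else 0.

Lemma delta0_rot v w : nonzero v -> nonzero w ->
  delta0 (vrot v) (vrot w) = delta0 v w - quadrant2 v + quadrant2 w.
Proof.
case: v w => [v1 v2] [w1 w2] hv hw.
rewrite /delta0 /vdelta /varc /ray0 /vrot /quadrant2 /=.
have -> : vcross (- v2, v1) (- w2, w1) = vcross (v1, v2) (w1, w2).
  by rewrite /vcross /=; ring.
move: hv hw; rewrite /nonzero /= => hv hw.
sector_cases (-1 : int) (0 : int) v1 v2; sector_cases (-1 : int) (0 : int) w1 w2;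
sector_cases (-1 : int) (0 : int) (- v2) v1; sector_cases (-1 : int) (0 : int) (- w2) w1;
rewrite /= /vcross /=; repeat case: ifP => ?; try lia; try nia.
Qed.

Definition rotmat : mat22 := Mat22 0 1 (-1) 0.

Lemma vrotE v : vrot v = vmul v rotmat.
Proof. by case: v => v1 v2; rewrite /vrot /vmul /=; congr (_, _); ring. Qed.

Lemma vrot_nonzero v : nonzero v -> nonzero (vrot v).
Proof. by case: v => v1 v2; rewrite /nonzero /vrot /=; case=> h; [right|left]; lia. Qed.

Definition coboundary_at (x : vec) : Prop := forall y z, nonzero y -> nonzero z ->
  vdelta x y z = delta0 x y + delta0 y z - delta0 x z.

(* The base ray lies on every arc starting at itself, so delta0 ray0 = 0. *)
Lemma coboundary_at_ray0 : coboundary_at ray0.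
Proof.
have arc0 v : varc ray0 ray0 v.
  case: v => v1 v2; rewrite /varc /ray0 /=.
  have -> : vsector (-1, 0) (-1, 0) = 0%N by [].
  by sector_cases (-1 : int) (0 : int) v1 v2; rewrite /= ?eqxx /vcross //=; lia.
by move=> y z _ _; rewrite /delta0 /vdelta !arc0 add0r subr0.
Qed.

Lemma coboundary_at_rot x : nonzero x -> coboundary_at (vrot x) -> coboundary_at x.
Proof.
move=> hx H y z hy hz.
have := H (vrot y) (vrot z) (vrot_nonzero hy) (vrot_nonzero hz).
by rewrite !delta0_rot // !vrotE vdelta_vmul // => ->; ring.
Qed.

Lemma coboundary_at_vmul x g t : 0 < det22 g -> 0 < t ->
  vmul ray0 g = vscale t ray0 -> coboundary_at (vmul x g) -> coboundary_at x.
Proof.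
move=> hd ht e H y z hy hz.
have E u v : delta0 (vmul u g) (vmul v g) = delta0 u v.
  by rewrite /delta0 -(vdelta_scale1 _ _ _ ht) -e vdelta_vmul.
have := H (vmul y g) (vmul z g) (vmul_nonzero hd hy) (vmul_nonzero hd hz).
by rewrite vdelta_vmul // !E.
Qed.

Lemma coboundary_at_scale x t : 0 < t -> coboundary_at x -> coboundary_at (vscale t x).
Proof.
move=> ht H y z hy hz.
by rewrite vdelta_scale1 // /delta0 !vdelta_scale2 // H.
Qed.

(* delta on rays is the coboundary of delta0: the first vectors for which
   this holds contain ray0 and are stable under the quarter turn, positive
   rescaling and shears fixing ray0, which together reach every ray. *)
Lemma delta_coboundary x y z : nonzero x -> nonzero y -> nonzero z ->
  vdelta x y z = delta0 x y + delta0 y z - delta0 x z.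
Proof.
have north : coboundary_at (0, 1).
  by apply: (@coboundary_at_rot (0, 1)); [right | exact: coboundary_at_ray0].
have east : coboundary_at (1, 0) by apply: (@coboundary_at_rot (1, 0)); [left | ].
have south : coboundary_at (0, -1).
  by apply: (@coboundary_at_rot (0, -1)); [right | rewrite /vrot /= opprK].
suff all_x : forall x, nonzero x -> coboundary_at x by move=> /all_x; apply.
case=> x1 x2 hx.
case: (x2 =P 0) => [e2|n2].
  subst x2; case: hx => //= h1; case: (ltrgtP x1 0) h1 => // h1 _.
    have -> : (x1, 0) = vscale (- x1) ray0 by rewrite /vscale /ray0 /=; congr (_, _); ring.
    by apply: coboundary_at_scale; [lia | exact: coboundary_at_ray0].
  have -> : (x1, 0) = vscale x1 (1, 0) by rewrite /vscale /=; congr (_, _); ring.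
  exact: coboundary_at_scale.
have sq : 0 < x2 * x2 by apply/sqr_pos/eqP.
apply: (@coboundary_at_vmul _ (Mat22 (x2 * x2) 0 (- x1 * x2) 1) (x2 * x2)) => //.
- by rewrite /det22 /=; lia.
- by rewrite /vmul /vscale /ray0 /=; congr (_, _); ring.
have -> : vmul (x1, x2) (Mat22 (x2 * x2) 0 (- x1 * x2) 1) = (0, x2).
  by rewrite /vmul /=; congr (_, _); ring.
case: (ltrgtP x2 0) n2 => // h _.
  have -> : (0, x2) = vscale (- x2) (0, -1) by rewrite /vscale /=; congr (_, _); ring.
  by apply: coboundary_at_scale; [lia | ].
have -> : (0, x2) = vscale x2 (0, 1) by rewrite /vscale /=; congr (_, _); ring.
exact: coboundary_at_scale.
Qed.

(* The group structure of SL2(Z) in coordinates; [adj22] is the inverse on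
   determinant-one matrices. *)
Definition mmul (x y : mat22) : mat22 :=
  Mat22 (e00 x * e00 y + e01 x * e10 y) (e00 x * e01 y + e01 x * e11 y)
        (e10 x * e00 y + e11 x * e10 y) (e10 x * e01 y + e11 x * e11 y).
Definition mone : mat22 := Mat22 1 0 0 1.
Definition adj22 (x : mat22) : mat22 := Mat22 (e11 x) (- e01 x) (- e10 x) (e00 x).

Ltac mat22_eq := match goal with |- Mat22 _ _ _ _ = Mat22 _ _ _ _ => congr Mat22; ring end.

Lemma mmulA x y z : mmul x (mmul y z) = mmul (mmul x y) z.
Proof. case: x y z => [? ? ? ?] [? ? ? ?] [? ? ? ?]; rewrite /mmul /=; mat22_eq. Qed.
Lemma mmulm1 x : mmul x mone = x.
Proof. case: x => ? ? ? ?; rewrite /mmul /=; mat22_eq. Qed.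
Lemma mmul1m x : mmul mone x = x.
Proof. case: x => ? ? ? ?; rewrite /mmul /=; mat22_eq. Qed.
Lemma det22M x y : det22 (mmul x y) = det22 x * det22 y.
Proof. case: x y => [? ? ? ?] [? ? ? ?]; rewrite /det22 /mmul /=; ring. Qed.
Lemma adj22M x y : adj22 (mmul x y) = mmul (adj22 y) (adj22 x).
Proof. case: x y => [? ? ? ?] [? ? ? ?]; rewrite /adj22 /mmul /=; mat22_eq. Qed.
Lemma det22_adj x : det22 (adj22 x) = det22 x.
Proof. case: x => ? ? ? ?; rewrite /det22 /adj22 /=; ring. Qed.
Lemma adj22K x : adj22 (adj22 x) = x.
Proof. case: x => ? ? ? ?; rewrite /adj22 /=; mat22_eq. Qed.
Lemma mmul_adjl x : det22 x = 1 -> mmul (adj22 x) x = mone.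
Proof. case: x => a b c d; rewrite /det22 /adj22 /mmul /mone /= => h; congr Mat22; lia. Qed.
Lemma mmul_adjr x : det22 x = 1 -> mmul x (adj22 x) = mone.
Proof. case: x => a b c d; rewrite /det22 /adj22 /mmul /mone /= => h; congr Mat22; lia. Qed.
Lemma vmulM v a b : vmul (vmul v a) b = vmul v (mmul a b).
Proof.
by case: v a b => [? ?] [? ? ? ?] [? ? ? ?]; rewrite /vmul /mmul /=; congr (_, _); ring.
Qed.
Lemma vmul1 v : vmul v mone = v.
Proof. by case: v => ? ?; rewrite /vmul /=; congr (_, _); ring. Qed.

(* The ray gamma l0, represented as l0 gamma^{-1}. *)
Definition ray (g : mat22) : vec := vmul ray0 (adj22 g).

Lemma ray_mul a b : ray (mmul a b) = vmul (ray b) (adj22 a).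
Proof. by rewrite /ray adj22M vmulM. Qed.

Lemma ray_nonzero g : det22 g = 1 -> nonzero (ray g).
Proof.
case: g => a b c d; rewrite /det22 /ray /vmul /adj22 /nonzero /ray0 /= => h.
by case: (d =P 0) => hd; [right | left]; lia.
Qed.

Definition cocycle (a b : mat22) : int := vdelta ray0 (ray a) (ray (mmul a b)).

Lemma cocycle_identity a b x : det22 a = 1 -> det22 b = 1 -> det22 x = 1 ->
  cocycle a b + cocycle (mmul a b) x = cocycle b x + cocycle a (mmul b x).
Proof.
move=> ha hb hx.
have hab : det22 (mmul a b) = 1 by rewrite det22M ha hb mulr1.
have habx : det22 (mmul (mmul a b) x) = 1 by rewrite det22M hab hx mulr1.
(* translating by a turns c(b, x) into delta(a l0, ab l0, abx l0) *)
have shift : cocycle b x = vdelta (ray a) (ray (mmul a b)) (ray (mmul (mmul a b) x)).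
  rewrite /cocycle -(@vdelta_vmul _ _ _ (adj22 a)); last by rewrite det22_adj ha.
  by rewrite -!ray_mul -/(ray a) mmulA.
rewrite shift (delta_coboundary (ray_nonzero ha) (ray_nonzero hab) (ray_nonzero habx)).
by rewrite /cocycle mmulA /delta0; ring.
Qed.

Lemma vdelta_diag u v : vdelta u v v = 0.
Proof. by rewrite /vdelta /varc eqxx /vcross mulrC subrr lexx orbT. Qed.

Lemma cocycle_a1 a : cocycle a mone = 0.
Proof. by rewrite /cocycle mmulm1 vdelta_diag. Qed.

Inductive letter := LS | LB.
Definition Smat : mat22 := Mat22 0 (-1) 1 0.
Definition Bmat : mat22 := Mat22 0 (-1) 1 1.
Definition letter_mat (l : letter) : mat22 := match l with LS => Smat | LB => Bmat end.

(* The weights are forced: a function F with F(gh) = F g + F h - 12 c(g,h)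
   must take the values F(S) = 3 and F(B) = 2 on the generators. *)
Definition weight (l : letter) : int := match l with LS => 3 | LB => 2 end.

Definition wmat (w : seq letter) : mat22 := foldl (fun m l => mmul m (letter_mat l)) mone w.

Definition wval_step (p : mat22 * int) (l : letter) : mat22 * int :=
  (mmul p.1 (letter_mat l), p.2 + weight l - 12 * cocycle p.1 (letter_mat l)).
Definition wval (w : seq letter) : int := (foldl wval_step (mone, 0) w).2.

Lemma wmat_rcons w X : wmat (rcons w X) = mmul (wmat w) (letter_mat X).
Proof. by rewrite /wmat foldl_rcons. Qed.

Lemma wval_rcons w X : wval (rcons w X) = wval w + weight X - 12 * cocycle (wmat w) (letter_mat X).
Proof.
have fst m v (u : seq letter) : (foldl wval_step (m, v) u).1 = foldl (fun m l => mmul m (letter_mat l)) m u.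
  by elim: u m v => //= l u IH m v; rewrite IH.
by rewrite /wval foldl_rcons /wval_step /= fst.
Qed.

Lemma wmat_cat u v : wmat (u ++ v) = mmul (wmat u) (wmat v).
Proof.
elim/last_ind: v => [|v X IH]; first by rewrite cats0 mmulm1.
by rewrite -rcons_cat !wmat_rcons IH mmulA.
Qed.

Lemma wmat_cons x w : wmat (x :: w) = mmul (letter_mat x) (wmat w).
Proof. by rewrite -cat1s wmat_cat /wmat /= mmul1m. Qed.

Lemma det_letter X : det22 (letter_mat X) = 1. Proof. by case: X. Qed.

Lemma det_wmat w : det22 (wmat w) = 1.
Proof.
elim/last_ind: w => [|w X IH] //.
by rewrite wmat_rcons det22M IH det_letter mulr1.
Qed.

Lemma wval_cat u v : wval (u ++ v) = wval u + wval v - 12 * cocycle (wmat u) (wmat v).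
Proof.
elim/last_ind: v => [|v X IH]; first by rewrite cats0 /= cocycle_a1; ring.
rewrite -rcons_cat !wval_rcons IH !wmat_rcons wmat_cat.
by have := cocycle_identity (det_wmat u) (det_wmat v) (det_letter X); lia.
Qed.

Definition wequiv (x y : seq letter) : Prop := wmat x = wmat y /\ wval x = wval y.

Lemma wequiv_cat u x y v : wequiv x y -> wval (u ++ x ++ v) = wval (u ++ y ++ v).
Proof. by move=> [e1 e2]; rewrite !wval_cat !wmat_cat e1 e2. Qed.

Lemma rel_B6 : wequiv [:: LB; LB; LB; LB; LB; LB] [::].
Proof. by split; vm_compute. Qed.
Lemma rel_S2 : wequiv [:: LS; LS] [:: LB; LB; LB].
Proof. by split; vm_compute. Qed.
Lemma rel_SB3 : wequiv [:: LS; LB; LB; LB] [:: LB; LB; LB; LS].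
Proof. by split; vm_compute. Qed.
Lemma rel_S3B3 : wequiv [:: LS; LS; LS; LB; LB; LB] [:: LS].
Proof. by split; vm_compute. Qed.
Lemma rel_SB : wequiv [:: LS; LB] [:: LB; LB; LB; LS; LS; LS; LB].
Proof. by split; vm_compute. Qed.

(* The monoid of determinant-one matrices with nonnegative entries is
   generated by T = [[1,1],[0,1]] and L = [[1,0],[1,1]], which are words in
   S and B; [tl_word] below writes its elements canonically in T and L. *)
Definition Tmat : mat22 := Mat22 1 1 0 1.
Definition Lmat : mat22 := Mat22 1 0 1 1.
Definition Tword : seq letter := [:: LS; LS; LS; LB].
Definition Lword : seq letter := [:: LS; LS; LS; LB; LB].
Lemma wmat_Tword : wmat Tword = Tmat. Proof. by vm_compute. Qed.
Lemma wmat_Lword : wmat Lword = Lmat. Proof. by vm_compute. Qed.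

Definition nonneg22 (m : mat22) : bool :=
  [&& 0 <= e00 m, 0 <= e01 m, 0 <= e10 m & 0 <= e11 m].
Definition posSL (m : mat22) : Prop := nonneg22 m /\ det22 m = 1.

Lemma posSL_build p q r s : 0 <= p -> 0 <= q -> 0 <= r -> 0 <= s ->
  p * s - q * r = 1 -> posSL (Mat22 p q r s).
Proof. by move=> *; split; [apply/and4P | rewrite /det22]. Qed.

Lemma posSL_T m : posSL m -> posSL (mmul m Tmat).
Proof.
case: m => p q r s [/and4P[/= h1 h2 h3 h4] hd]; rewrite /det22 /= in hd.
by rewrite /mmul /=; apply: posSL_build; nia.
Qed.

Lemma posSL_L m : posSL m -> posSL (mmul m Lmat).
Proof.
case: m => p q r s [/and4P[/= h1 h2 h3 h4] hd]; rewrite /det22 /= in hd.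
by rewrite /mmul /=; apply: posSL_build; nia.
Qed.

Lemma posSL_diag p s : posSL (Mat22 p 0 0 s) -> p = 1 /\ s = 1.
Proof.
move=> [/and4P[/= h1 _ _ h4]]; rewrite /det22 /= mul0r subr0 => hd.
have hp : 0 < p by nia.
have hs : 0 < s by nia.
by split; nia.
Qed.

Definition peelT (m : mat22) : mat22 := Mat22 (e00 m) (e01 m - e00 m) (e10 m) (e11 m - e10 m).
Definition peelL (m : mat22) : mat22 := Mat22 (e00 m - e01 m) (e01 m) (e10 m - e11 m) (e11 m).
Definition offdiag0 (m : mat22) : bool := (e01 m == 0) && (e10 m == 0).
Definition T_last (m : mat22) : bool := (e00 m <= e01 m) && (e10 m <= e11 m).

Definition entry_sum (m : mat22) : nat := absz (e00 m + e01 m + e10 m + e11 m).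

Lemma posSL_offdiag0 m : posSL m -> offdiag0 m -> m = mone.
Proof. by case: m => p q r s hm /andP[/eqP /= hq /eqP /= hr]; subst; have [-> ->] := posSL_diag hm. Qed.

Lemma peelT_spec m : posSL m -> ~~ offdiag0 m -> T_last m ->
  [/\ posSL (peelT m), (entry_sum (peelT m) < entry_sum m)%N & m = mmul (peelT m) Tmat].
Proof.
case: m => p q r s [/and4P[/= h1 h2 h3 h4] hd] hI /andP[/= hT1 hT2].
rewrite /det22 /= in hd; rewrite /peelT /entry_sum /=; split.
- by apply: posSL_build; lia.
- by case/nandP: hI => /eqP /= hI; nia.
- by rewrite /mmul /Tmat /=; mat22_eq.
Qed.

Lemma peelL_spec m : posSL m -> ~~ offdiag0 m -> ~~ T_last m ->
  [/\ posSL (peelL m), (entry_sum (peelL m) < entry_sum m)%N & m = mmul (peelL m) Lmat].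
Proof.
case: m => p q r s [/and4P[/= h1 h2 h3 h4] hd] hI hT.
rewrite /det22 /= in hd; rewrite /peelL /entry_sum /=.
have [a b] : q <= p /\ s <= r.
  move: hT; rewrite /T_last /= negb_and -!ltNge => /orP[] h.
    by case/nandP: hI => /eqP /= hI; split; nia.
  by case/nandP: hI => /eqP /= hI; split; nia.
split.
- by apply: posSL_build; lia.
- by case/nandP: hI => /eqP /= hI; nia.
- by rewrite /mmul /Lmat /=; mat22_eq.
Qed.

Fixpoint tl_word_fuel (n : nat) (m : mat22) : seq letter :=
  match n with
  | 0%N => [::]
  | n'.+1 =>
    if offdiag0 m then [::]
    else if T_last m then tl_word_fuel n' (peelT m) ++ Tword
    else tl_word_fuel n' (peelL m) ++ Lword
  end.

Definition tl_word (m : mat22) : seq letter := tl_word_fuel (entry_sum m) m.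

Lemma entry_sum_gt0 m : posSL m -> (0 < entry_sum m)%N.
Proof.
case: m => p q r s [/and4P[/= h1 h2 h3 h4] hd]; rewrite /det22 /= in hd.
by rewrite /entry_sum /=; nia.
Qed.

Lemma tl_word_fuel_spec n m : posSL m -> (entry_sum m <= n)%N ->
  wmat (tl_word_fuel n m) = m /\ tl_word_fuel n m = tl_word m.
Proof.
rewrite /tl_word; elim/ltn_ind: n m => n IH m hm hn.
case: n IH hn => [|n] IH hn; first by have := entry_sum_gt0 hm; lia.
case E: (entry_sum m) (entry_sum_gt0 hm) hn => [//|k] _ hk /=.
case: ifP => hI; first by rewrite (posSL_offdiag0 hm hI).
case: ifP => hT.
  have [hm' hlt em] := peelT_spec hm (negbT hI) hT.
  have [IH1 IH2] := IH n ltac:(lia) _ hm' ltac:(lia).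
  have [_ IH2'] := IH k ltac:(lia) _ hm' ltac:(lia).
  by rewrite wmat_cat IH1 wmat_Tword -em IH2 -IH2'.
have [hm' hlt em] := peelL_spec hm (negbT hI) (negbT hT).
have [IH1 IH2] := IH n ltac:(lia) _ hm' ltac:(lia).
have [_ IH2'] := IH k ltac:(lia) _ hm' ltac:(lia).
by rewrite wmat_cat IH1 wmat_Lword -em IH2 -IH2'.
Qed.

Lemma wmat_tl_word m : posSL m -> wmat (tl_word m) = m.
Proof. by move=> hm; have [] := tl_word_fuel_spec hm (leqnn _). Qed.

Lemma tl_word_peel m : posSL m -> ~~ offdiag0 m ->
  tl_word m = if T_last m then tl_word (peelT m) ++ Tword else tl_word (peelL m) ++ Lword.
Proof.
move=> hm hI; rewrite {1}/tl_word.
case E: (entry_sum m) (entry_sum_gt0 hm) => [//|k] _ /=.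
rewrite (negbTE hI); case: ifP => hT.
  have [hm' hlt _] := peelT_spec hm hI hT.
  by rewrite (tl_word_fuel_spec hm' _).2 //; lia.
have [hm' hlt _] := peelL_spec hm hI (negbT hT).
by rewrite (tl_word_fuel_spec hm' _).2 //; lia.
Qed.

Lemma tl_word_T m : posSL m -> tl_word (mmul m Tmat) = tl_word m ++ Tword.
Proof.
case: m => p q r s hm; have hmT := posSL_T hm.
have [/and4P[/= h1 h2 h3 h4] hd] := hm; rewrite /det22 /= in hd.
rewrite tl_word_peel //; last by apply/negP => /andP[/eqP /= ? /eqP /= ?]; nia.
rewrite ifT; last by rewrite /T_last /=; apply/andP; split; lia.
by congr (tl_word _ ++ _); rewrite /peelT /mmul /Tmat /=; mat22_eq.
Qed.

Lemma tl_word_L m : posSL m -> tl_word (mmul m Lmat) = tl_word m ++ Lword.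
Proof.
case: m => p q r s hm; have hmL := posSL_L hm.
have [/and4P[/= h1 h2 h3 h4] hd] := hm; rewrite /det22 /= in hd.
rewrite tl_word_peel //; last by apply/negP => /andP[/eqP /= ? /eqP /= ?]; nia.
rewrite ifF; last by rewrite /T_last /=; apply/negP => /andP[? ?]; nia.
by congr (tl_word _ ++ _); rewrite /peelL /mmul /Lmat /=; mat22_eq.
Qed.

Lemma posSL_split m : posSL m ->
  m = mone \/ (exists2 m0, posSL m0 & m = mmul m0 Tmat) \/ (exists2 m0, posSL m0 & m = mmul m0 Lmat).
Proof.
move=> hm; case: (boolP (offdiag0 m)) => hI; first by left; exact: posSL_offdiag0.
right; case: (boolP (T_last m)) => hT.
  by have [hm' _ em] := peelT_spec hm hI hT; left; exists (peelT m).
by have [hm' _ em] := peelL_spec hm hI hT; right; exists (peelL m).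
Qed.

Definition Bword (n : nat) : seq letter := nseq n LB.
Definition Sword (n : nat) : seq letter := nseq n LS.

Definition Bpow (k : nat) : mat22 :=
  match k with
  | 1 => Mat22 0 (-1) 1 1 | 2 => Mat22 (-1) (-1) 1 0 | 3 => Mat22 (-1) 0 0 (-1)
  | 4 => Mat22 0 1 (-1) (-1) | 5 => Mat22 1 1 (-1) 0 | _ => mone end%N.
Definition Spow (k : nat) : mat22 :=
  match k with
  | 1 => Mat22 0 (-1) 1 0 | 2 => Mat22 (-1) 0 0 (-1) | 3 => Mat22 0 1 (-1) 0
  | _ => mone end%N.

Lemma wmat_Bword k : wmat (Bword k) = Bpow (k %% 6).
Proof.
elim/ltn_ind: k => k IH; case: (ltnP k 6) => hk.
  by rewrite modn_small //; case: k hk {IH} => [|[|[|[|[|[|k]]]]]] hk //; vm_compute.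
have -> : Bword k = Bword 6 ++ Bword (k - 6) by rewrite /Bword -nseqD subnKC.
rewrite wmat_cat (IH (k - 6)%N); last by lia.
have -> : wmat (Bword 6) = mone by vm_compute.
by rewrite mmul1m -{2}(subnK hk) modnDr.
Qed.

Lemma wmat_Sword k : wmat (Sword k) = Spow (k %% 4).
Proof.
elim/ltn_ind: k => k IH; case: (ltnP k 4) => hk.
  by rewrite modn_small //; case: k hk {IH} => [|[|[|[|k]]]] hk //; vm_compute.
have -> : Sword k = Sword 4 ++ Sword (k - 4) by rewrite /Sword -nseqD subnKC.
rewrite wmat_cat (IH (k - 4)%N); last by lia.
have -> : wmat (Sword 4) = mone by vm_compute.
by rewrite mmul1m -{2}(subnK hk) modnDr.
Qed.

Definition shape (i : nat) (m : mat22) (j : nat) : mat22 := mmul (mmul (Bpow i) m) (Spow j).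

(* The only products B^k m S^l with m in the monoid that are again in the
   monoid are those with B^k S^l = 1 (recall B^3 = S^2 = -1). *)
Lemma nonneg_BmS k l m : (k < 6)%N -> (l < 4)%N -> posSL m ->
  nonneg22 (shape k m l) = (((k == 0) && (l == 0)) || ((k == 3) && (l == 2)))%N.
Proof.
case: m => p q r s hk hl [/and4P[/= h1 h2 h3 h4] hd]; rewrite /det22 /= in hd.
case: k hk => [|[|[|[|[|[|k]]]]]] hk //; case: l hl => [|[|[|[|l]]]] hl //;
rewrite /shape /mmul /nonneg22 /=;
first [ by apply/negbTE/negP => /and4P[? ? ? ?]; nia | by apply/and4P; split; nia ].
Qed.

Definition unshape (g : mat22) (i j : nat) : mat22 :=
  mmul (mmul (Bpow ((6 - i) %% 6)) g) (Spow ((3 * j) %% 4)).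

Lemma unshape_shape i m j i' j' : (i < 6)%N -> (j < 4)%N ->
  unshape (shape i m j) i' j' = shape ((6 - i' + i) %% 6) m ((j + 3 * j') %% 4).
Proof.
have BB a b : mmul (Bpow (a %% 6)) (Bpow (b %% 6)) = Bpow ((a + b) %% 6).
  by rewrite -!wmat_Bword -wmat_cat /Bword -nseqD.
have SS a b : mmul (Spow (a %% 4)) (Spow (b %% 4)) = Spow ((a + b) %% 4).
  by rewrite -!wmat_Sword -wmat_cat /Sword -nseqD.
move=> hi hj; rewrite /unshape /shape -{1}(modn_small hi) -{1}(modn_small hj).
by rewrite !mmulA BB -!mmulA SS.
Qed.

Definition shape_indices : seq (nat * nat) :=
  [:: (0,0); (0,1); (1,0); (1,1); (2,0); (2,1); (3,0); (3,1); (4,0); (4,1); (5,0); (5,1)]%N.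
Definition shape_index (g : mat22) : nat * nat :=
  nth (0, 0)%N shape_indices (find (fun p => nonneg22 (unshape g p.1 p.2)) shape_indices).
Definition normal_word (g : mat22) : seq letter :=
  Bword (shape_index g).1 ++ tl_word (unshape g (shape_index g).1 (shape_index g).2)
  ++ Sword (shape_index g).2.

Lemma unshape_test i m j i' j' : (i < 6)%N -> (j < 2)%N -> (i' < 6)%N -> (j' < 2)%N ->
  posSL m -> nonneg22 (unshape (shape i m j) i' j') = ((i', j') == (i, j)).
Proof.
move=> hi hj hi' hj' hm; rewrite unshape_shape ?nonneg_BmS ?ltn_mod //; last by lia.
by move: hi hj hi' hj'; case: i => [|[|[|[|[|[|i]]]]]] //; case: j => [|[|j]] //;
  case: i' => [|[|[|[|[|[|i']]]]]] //; case: j' => [|[|j']].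
Qed.

Lemma unshape_id i m j : (i < 6)%N -> (j < 2)%N -> unshape (shape i m j) i j = m.
Proof.
move=> hi hj; rewrite unshape_shape; try lia.
have -> : ((6 - i + i) %% 6 = 0)%N by rewrite subnK ?modnn // ltnW.
have -> : ((j + 3 * j) %% 4 = 0)%N by case: j hj => [|[|j]].
by rewrite /shape mmul1m mmulm1.
Qed.

Lemma normal_word_shape i m j : (i < 6)%N -> (j < 2)%N -> posSL m ->
  normal_word (shape i m j) = Bword i ++ tl_word m ++ Sword j.
Proof.
move=> hi hj hm.
have bounds p : p \in shape_indices -> (p.1 < 6)%N /\ (p.2 < 2)%N.
  have /allP/(_ p) : all (fun p : nat * nat => (p.1 < 6) && (p.2 < 2))%N shape_indices by [].
  by move=> h /h /andP.
have hidx : shape_index (shape i m j) = (i, j).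
  rewrite /shape_index (@eq_in_find _ _ (pred1 (i, j))).
    rewrite -/(index (i, j) shape_indices) nth_index //.
    by move: hi hj; case: i => [|[|[|[|[|[|i]]]]]] //; case: j => [|[|j]].
  by move=> [a b] /bounds [ha hb]; rewrite /= unshape_test.
by rewrite /normal_word hidx /= unshape_id.
Qed.

Lemma wmat_shape_word i m j : (i < 6)%N -> (j < 2)%N -> posSL m ->
  wmat (Bword i ++ tl_word m ++ Sword j) = shape i m j.
Proof.
move=> hi hj hm; rewrite !wmat_cat wmat_tl_word // wmat_Bword wmat_Sword !modn_small //; last by lia.
by rewrite /shape mmulA.
Qed.

Ltac shape_cases i := case: i => [|[|[|[|[|[|i]]]]]] //.

Lemma shape_S0 i m : mmul (shape i m 0) Smat = shape i m 1.
Proof. by rewrite /shape mmulm1. Qed.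

Lemma shape_S1 i m : (i < 6)%N -> mmul (shape i m 1) Smat = shape ((i + 3) %% 6) m 0.
Proof. by case: m => p q r s; shape_cases i => _; rewrite /shape /mmul /=; mat22_eq. Qed.

Lemma shape_one_B i : (i < 6)%N -> mmul (shape i mone 0) Bmat = shape ((i + 1) %% 6) mone 0.
Proof. by shape_cases i => _; vm_compute. Qed.

Lemma shape_T_B i m : (i < 6)%N -> mmul (shape i (mmul m Tmat) 0) Bmat = shape i (mmul m Lmat) 0.
Proof. by case: m => p q r s; shape_cases i => _; rewrite /shape /mmul /=; mat22_eq. Qed.

Lemma shape_L_B i m : (i < 6)%N -> mmul (shape i (mmul m Lmat) 0) Bmat = shape i m 1.
Proof. by case: m => p q r s; shape_cases i => _; rewrite /shape /mmul /=; mat22_eq. Qed.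

Lemma shape_S1_B i m : (i < 6)%N ->
  mmul (shape i m 1) Bmat = shape ((i + 3) %% 6) (mmul m Tmat) 0.
Proof. by case: m => p q r s; shape_cases i => _; rewrite /shape /mmul /=; mat22_eq. Qed.

Definition is_shape (g : mat22) : Prop :=
  exists i j m, [/\ (i < 6)%N, (j < 2)%N, posSL m & g = shape i m j].

Lemma wmat_is_shape w : is_shape (wmat w).
Proof.
elim/last_ind: w => [|w X [i [j [m [hi hj hm e]]]]].
  by exists 0%N, 0%N, mone; split => //; vm_compute.
have i3 : ((i + 3) %% 6 < 6)%N by rewrite ltn_mod.
rewrite wmat_rcons e {e}; case: X; case: j hj => [|[|j]] hj //=.
- by exists i, 1%N, m; rewrite shape_S0.
- by exists ((i + 3) %% 6)%N, 0%N, m; rewrite shape_S1.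
- case: (posSL_split hm) => [->|[[m0 hm0 ->]|[m0 hm0 ->]]].
  + by exists ((i + 1) %% 6)%N, 0%N, mone; rewrite shape_one_B ?ltn_mod.
  + by exists i, 0%N, (mmul m0 Lmat); rewrite shape_T_B //; split => //; exact: posSL_L.
  + by exists i, 1%N, m0; rewrite shape_L_B.
- by exists ((i + 3) %% 6)%N, 0%N, (mmul m Tmat); rewrite shape_S1_B //; split => //; exact: posSL_T.
Qed.

(* B^3 = -1 commutes with every word, matrix and value alike. *)
Lemma B3_central w : wequiv (w ++ Bword 3) (Bword 3 ++ w).
Proof.
have mat_comm u : wmat (u ++ Bword 3) = wmat (Bword 3 ++ u).
  by rewrite !wmat_cat wmat_Bword; case: (wmat u) => a b c d; rewrite /mmul /=; mat22_eq.
split; first exact: mat_comm.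
elim/last_ind: w => [|w X IH]; first by rewrite cats0.
have -> : rcons w X ++ Bword 3 = w ++ ([:: X] ++ Bword 3) ++ [::] by rewrite cats0 -cats1 -catA.
rewrite (@wequiv_cat _ _ (Bword 3 ++ [:: X])); last by case: X; [exact: rel_SB3 | ].
have -> : w ++ (Bword 3 ++ [:: X]) ++ [::] = [::] ++ (w ++ Bword 3) ++ [:: X] by rewrite cats0 catA.
rewrite (@wequiv_cat _ _ (Bword 3 ++ w)) //.
by rewrite cat0s -catA cats1.
Qed.

Lemma wval_B3_shift i u : (i < 6)%N ->
  wval (Bword i ++ Bword 3 ++ u) = wval (Bword ((i + 3) %% 6) ++ u).
Proof.
move=> hi; case: (ltnP i 3) => h3.
  by rewrite catA /Bword -nseqD modn_small //; lia.
have -> : Bword i = Bword (i - 3) ++ Bword 3 by rewrite /Bword -nseqD subnK.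
have -> : ((i + 3) %% 6 = i - 3)%N by move: hi h3; case: i => [|[|[|[|[|[|i]]]]]].
rewrite -!catA [Bword 3 ++ (Bword 3 ++ u)]catA.
by rewrite (@wequiv_cat _ _ [::]); [ | exact: rel_B6].
Qed.

Lemma tl_word_one : tl_word mone = [::].
Proof. by []. Qed.

Lemma step_S i j m : (i < 6)%N -> (j < 2)%N -> posSL m ->
  wval (Bword i ++ tl_word m ++ Sword j ++ [:: LS]) = wval (normal_word (mmul (shape i m j) Smat)).
Proof.
move=> hi hj hm; case: j hj => [|[|j]] hj //; first by rewrite shape_S0 normal_word_shape.
rewrite shape_S1 // normal_word_shape ?ltn_mod //.
(* S S = B^3, and B^3 moves to the front where it merges with B^i *)
have -> : Bword i ++ tl_word m ++ Sword 1 ++ [:: LS] = (Bword i ++ tl_word m) ++ [:: LS; LS] ++ [::].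
  by rewrite cats0 -catA.
rewrite (@wequiv_cat _ _ (Bword 3)); last exact: rel_S2.
have -> : (Bword i ++ tl_word m) ++ Bword 3 ++ [::] = Bword i ++ (tl_word m ++ Bword 3) ++ [::].
  by rewrite !cats0 -catA.
rewrite (@wequiv_cat _ _ (Bword 3 ++ tl_word m)); last exact: B3_central.
by rewrite cats0 wval_B3_shift // /Sword /= cats0.
Qed.

Lemma step_B0 i m : (i < 6)%N -> posSL m ->
  wval (Bword i ++ tl_word m ++ [:: LB]) = wval (normal_word (mmul (shape i m 0) Bmat)).
Proof.
move=> hi hm; case: (posSL_split hm) => [->|[[m0 hm0 ->]|[m0 hm0 ->]]].
- rewrite shape_one_B // normal_word_shape ?ltn_mod // tl_word_one /Sword /= !cats0.
  case: (ltnP i 5) => h5.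
    by rewrite modn_small ?addn1 // -[[:: LB]]/(Bword 1) /Bword -nseqD addn1.
  have -> : i = 5%N by lia.
  exact: (proj2 rel_B6).
- (* T B = L *)
  rewrite shape_T_B // normal_word_shape //; last exact: posSL_L.
  by rewrite tl_word_L // tl_word_T // -!catA.
- (* L B = S^3 B^3 = S *)
  rewrite shape_L_B // normal_word_shape // tl_word_L //.
  have -> : Bword i ++ (tl_word m0 ++ Lword) ++ [:: LB] =
            (Bword i ++ tl_word m0) ++ [:: LS; LS; LS; LB; LB; LB] ++ [::].
    by rewrite cats0 -!catA.
  by rewrite (@wequiv_cat _ _ [:: LS]) ?cats0 -?catA //; exact: rel_S3B3.
Qed.

Lemma step_B1 i m : (i < 6)%N -> posSL m ->
  wval (Bword i ++ tl_word m ++ [:: LS; LB]) = wval (normal_word (mmul (shape i m 1) Bmat)).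
Proof.
move=> hi hm; rewrite shape_S1_B // normal_word_shape ?ltn_mod //; last exact: posSL_T.
rewrite tl_word_T //.
(* S B = B^3 T, and B^3 moves to the front *)
have -> : Bword i ++ tl_word m ++ [:: LS; LB] = (Bword i ++ tl_word m) ++ [:: LS; LB] ++ [::].
  by rewrite cats0 -catA.
rewrite (@wequiv_cat _ _ (Bword 3 ++ Tword)); last exact: rel_SB.
have -> : (Bword i ++ tl_word m) ++ (Bword 3 ++ Tword) ++ [::] =
          Bword i ++ (tl_word m ++ Bword 3) ++ Tword by rewrite cats0 -!catA.
rewrite (@wequiv_cat _ _ (Bword 3 ++ tl_word m)); last exact: B3_central.
by rewrite -catA wval_B3_shift // /Sword /= cats0.
Qed.

Lemma normal_word_step i j m X : (i < 6)%N -> (j < 2)%N -> posSL m ->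
  wval (Bword i ++ tl_word m ++ Sword j ++ [:: X]) =
  wval (normal_word (mmul (shape i m j) (letter_mat X))).
Proof.
move=> hi hj hm; case: X; first exact: step_S.
by case: j hj => [|[|j]] hj //; [exact: step_B0 | exact: step_B1].
Qed.

Lemma wval_normal_word w : wval w = wval (normal_word (wmat w)).
Proof.
elim/last_ind: w => [|w X IH].
  by have -> : wmat [::] = shape 0 mone 0 by vm_compute.
have [i [j [m [hi hj hm e]]]] := wmat_is_shape w.
have -> : rcons w X = [::] ++ w ++ [:: X] by rewrite cats1.
rewrite (@wequiv_cat _ _ (normal_word (wmat w))); last first.
  by split => //; rewrite e normal_word_shape // wmat_shape_word.
by rewrite e normal_word_shape // -!catA cat0s normal_word_step // cats1 wmat_rcons e.
Qed.

(* S and B generate SL2(Z): a Euclidean algorithm on the first column. *)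
Definition Tinv_word : seq letter := [:: LB; LB; LB; LB; LB; LS].
Lemma wmat_Tinv_word : wmat Tinv_word = Mat22 1 (-1) 0 1. Proof. by vm_compute. Qed.

Lemma unipotent_word (k : int) : exists w, wmat w = Mat22 1 k 0 1.
Proof.
have nat_case (n : nat) : (exists w, wmat w = Mat22 1 n 0 1) /\ (exists w, wmat w = Mat22 1 (- n%:Z) 0 1).
  elim: n => [|n [[w1 e1] [w2 e2]]]; first by split; exists [::].
  split; first by exists (w1 ++ Tword); rewrite wmat_cat e1 wmat_Tword /mmul /Tmat /=; congr Mat22; lia.
  by exists (w2 ++ Tinv_word); rewrite wmat_cat e2 wmat_Tinv_word /mmul /=; congr Mat22; lia.
case: k => n; first by case: (nat_case n).
by case: (nat_case n.+1) => _ [w e]; exists w; rewrite e; congr Mat22.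
Qed.

Lemma words_generate_measure n g : det22 g = 1 ->
  (absz (e00 g) + 2 * absz (e10 g) < n)%N -> exists w, wmat w = g.
Proof.
elim: n g => [|n IH] [p q r s]; rewrite /det22 /= => hd hn //.
case: (r =P 0) => [hr|hr].
  (* g = T^q or -T^-q = B^3 T^-q *)
  subst r; rewrite mulr0 subr0 in hd.
  have [[-> ->]|[-> ->]] : (p = 1 /\ s = 1) \/ (p = -1 /\ s = -1).
    by case: (ltrgtP p 0) => hp; case: (ltrgtP s 0) => hs;
       first [ by exfalso; nia | by right; split; nia | by left; split; nia ].
  exact: unipotent_word.
  have [w e] := unipotent_word (- q).
  by exists (Bword 3 ++ w); rewrite wmat_cat e wmat_Bword /mmul /=; mat22_eq.
case: (leqP (absz r) (absz p)) => hrp.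
  (* left division by T or T^-1 decreases |p| *)
  case: (ltP 0 (p * r)) => hpr.
    have [w e] := IH (Mat22 (p - r) (q - s) r s) ltac:(rewrite /det22 /=; lia) ltac:(rewrite /=; nia).
    by exists (Tword ++ w); rewrite wmat_cat wmat_Tword e /mmul /Tmat /=; mat22_eq.
  have [w e] := IH (Mat22 (p + r) (q + s) r s) ltac:(rewrite /det22 /=; lia) ltac:(rewrite /=; nia).
  by exists (Tinv_word ++ w); rewrite wmat_cat wmat_Tinv_word e /mmul /=; mat22_eq.
(* left division by S swaps the roles of p and r *)
have [w e] := IH (Mat22 r s (- p) (- q)) ltac:(rewrite /det22 /=; lia) ltac:(rewrite /=; lia).
by exists (LS :: w); rewrite wmat_cons e /mmul /=; mat22_eq.
Qed.

Lemma words_generate g : det22 g = 1 -> exists w, wmat w = g.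
Proof. by move=> h; apply: (words_generate_measure h (ltnSn _)). Qed.

(* The function 12 phi(1, g): its defect is 12 times the cocycle. *)
Definition qmor (g : mat22) : int := wval (normal_word g).

Lemma qmorM a b : det22 a = 1 -> det22 b = 1 ->
  qmor (mmul a b) = qmor a + qmor b - 12 * cocycle a b.
Proof.
move=> ha hb; have [wa <-] := words_generate ha; have [wb <-] := words_generate hb.
by rewrite /qmor -wmat_cat -!wval_normal_word wval_cat.
Qed.

(* A homomorphism from SL2(Z) to the rationals is trivial, as SL2(Z) is
   generated by the elements S and B of finite order. *)
Lemma sl2_hom_trivial (f : mat22 -> rat) :
  (forall x y, det22 x = 1 -> det22 y = 1 -> f (mmul x y) = f x + f y) ->
  forall x, det22 x = 1 -> f x = 0.
Proof.
move=> fM.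
have f_one : f mone = 0 by have := fM mone mone erefl erefl; rewrite mmulm1; lra.
have f_pow X k : f (wmat (nseq k X)) = k%:R * f (letter_mat X).
  elim: k => [|k IH]; first by rewrite mul0r; exact: f_one.
  by rewrite /= wmat_cons fM ?det_letter ?det_wmat // IH mulrS mulrDl mul1r.
have f_gen X : f (letter_mat X) = 0.
  have [n n_gt0 e] : exists2 n, (0 < n)%N & wmat (nseq n X) = mone.
    by case: X; [exists 4%N | exists 6%N].
  have /esym/eqP := f_pow X n; rewrite e f_one mulf_eq0 pnatr_eq0 (gtn_eqF n_gt0) /=.
  by move/eqP.
move=> x /words_generate [w <-]; elim: w => [|l w IH]; first exact: f_one.
by rewrite wmat_cons fM ?det_letter ?det_wmat // IH f_gen add0r.
Qed.

Definition of_mx (g : 'M[int]_2) : mat22 := Mat22 (g 0 0) (g 0 1) (g 1 0) (g 1 1).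
Definition to_mx (x : mat22) : 'M[int]_2 :=
  \matrix_(i < 2, j < 2)
    (if i == 0 then (if j == 0 then e00 x else e01 x) else (if j == 0 then e10 x else e11 x)).
Definition rowv (v : 'rV[int]_2) : vec := (v 0 0, v 0 1).

Lemma ord2E (i : 'I_2) : i = 0 \/ i = 1.
Proof. by case: i => [[|[|i]] hi] //; [left | right]; apply: val_inj. Qed.

Lemma of_mxK x : of_mx (to_mx x) = x.
Proof. by case: x => a b c d; rewrite /of_mx !mxE. Qed.

Lemma to_mxK g : to_mx (of_mx g) = g.
Proof. by apply/matrixP => i j; rewrite mxE; case: (ord2E i) => ->; case: (ord2E j) => ->. Qed.

Lemma sum_ord2 (F : 'I_2 -> int) : \sum_(k < 2) F k = F 0 + F 1.
Proof.
rewrite big_ord_recl big_ord1; congr (F _ + F _); exact: val_inj.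
Qed.

Lemma of_mxM g h : of_mx (g *m h) = mmul (of_mx g) (of_mx h).
Proof. by rewrite /of_mx /mmul !mxE !sum_ord2. Qed.

Lemma to_mxM x y : to_mx (mmul x y) = to_mx x *m to_mx y.
Proof. by rewrite -[to_mx x *m _]to_mxK of_mxM !of_mxK. Qed.

Lemma rowv_mul v g : rowv (v *m g) = vmul (rowv v) (of_mx g).
Proof. by rewrite /rowv /vmul !mxE !sum_ord2. Qed.

Lemma det_of_mx g : \det g = det22 (of_mx g).
Proof.
rewrite (expand_det_row _ 0) sum_ord2 /cofactor !det_mx11 !mxE /det22 /=.
have -> : lift 0 (0 : 'I_1) = 1 :> 'I_2 by apply/val_inj.
have -> : lift 1 (0 : 'I_1) = 0 :> 'I_2 by apply/val_inj.
by rewrite expr0 expr1 mul1r mulN1r; ring.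
Qed.

Lemma SL2Z_of_mx g : SL2Z g -> det22 (of_mx g) = 1.
Proof. by rewrite /SL2Z det_of_mx. Qed.

Lemma of_mx_inv g : SL2Z g -> of_mx (invmx g) = adj22 (of_mx g).
Proof.
move=> hg; have hu : g \in unitmx by rewrite unitmxE hg unitr1.
have one : of_mx 1%:M = mone by rewrite /of_mx !mxE.
rewrite -[of_mx (invmx g)]mmulm1 -(mmul_adjr (SL2Z_of_mx hg)) mmulA -of_mxM.
by rewrite mulVmx // one mmul1m.
Qed.

Lemma rowv_act g : SL2Z g -> rowv (act g l0) = ray (of_mx g).
Proof. by move=> hg; rewrite /act rowv_mul of_mx_inv // /ray /rowv !mxE. Qed.

Lemma delta_rowv u v w : delta u v w = vdelta (rowv u) (rowv v) (rowv w).
Proof. by []. Qed.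

Definition phi0 (g1 g2 : 'M[int]_2) : rat :=
  (qmor (mmul (adj22 (of_mx g1)) (of_mx g2)))%:~R / 12%:R.

(* Translating by G1, the cocycle of G1^-1 G2 and G2^-1 G3 is delta of the
   three rays G1 l0, G2 l0, G3 l0. *)
Lemma cocycle_rays G1 G2 G3 : det22 G1 = 1 -> det22 G2 = 1 ->
  cocycle (mmul (adj22 G1) G2) (mmul (adj22 G2) G3) = vdelta (ray G1) (ray G2) (ray G3).
Proof.
move=> h1 h2; rewrite /cocycle -mmulA [mmul G2 _]mmulA (mmul_adjr h2) mmul1m.
have ray_adj G : ray (mmul (adj22 G1) G) = vmul (ray G) G1.
  by rewrite /ray adj22M adj22K vmulM.
have ray0E : vmul (ray G1) G1 = ray0 by rewrite /ray vmulM (mmul_adjl h1) vmul1.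
by rewrite -ray0E !ray_adj vdelta_vmul // h1.
Qed.

Lemma phi0_spec : phi_spec phi0.
Proof.
split; [|split].
- by move=> g1 g2 _ _; exists (qmor (mmul (adj22 (of_mx g1)) (of_mx g2))).
- move=> h g1 g2 /SL2Z_of_mx hh _ _; rewrite /phi0 !of_mxM adj22M.
  by rewrite -mmulA [mmul (adj22 (of_mx h)) _]mmulA (mmul_adjl hh) mmul1m.
- move=> g1 g2 g3 h1 h2 h3; rewrite /phi0.
  have d1 := SL2Z_of_mx h1; have d2 := SL2Z_of_mx h2; have d3 := SL2Z_of_mx h3.
  have det_quot G G' : det22 G = 1 -> det22 G' = 1 -> det22 (mmul (adj22 G) G') = 1.
    by move=> hG hG'; rewrite det22M det22_adj hG hG' mulr1.
  have chain : mmul (mmul (adj22 (of_mx g1)) (of_mx g2)) (mmul (adj22 (of_mx g2)) (of_mx g3))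
             = mmul (adj22 (of_mx g1)) (of_mx g3).
    by rewrite -mmulA [mmul (of_mx g2) _]mmulA (mmul_adjr d2) mmul1m.
  rewrite -chain (qmorM (det_quot _ _ d1 d2) (det_quot _ _ d2 d3)) cocycle_rays //.
  rewrite delta_rowv !rowv_act //.
  move: (qmor _) (qmor _) (vdelta _ _ _) => x y z.
  by rewrite !(intrD, intrB, intrM); lra.
Qed.

(* Any left-invariant function on pairs satisfying the homogeneous cocycle
   equation vanishes: D(1, .) is a homomorphism SL2(Z) -> Q. *)
Lemma invariant_cocycle_trivial (D : 'M[int]_2 -> 'M[int]_2 -> rat) :
  (forall h g1 g2, SL2Z h -> SL2Z g1 -> SL2Z g2 -> D (h *m g1) (h *m g2) = D g1 g2) ->
  (forall g1 g2 g3, SL2Z g1 -> SL2Z g2 -> SL2Z g3 -> D g1 g2 + D g2 g3 - D g1 g3 = 0) ->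
  forall g1 g2, SL2Z g1 -> SL2Z g2 -> D g1 g2 = 0.
Proof.
move=> Dinv Dco g1 g2 h1 h2.
have SL_to x : det22 x = 1 -> SL2Z (to_mx x) by move=> hx; rewrite /SL2Z det_of_mx of_mxK.
have SL1 : SL2Z 1%:M by rewrite /SL2Z det1.
pose f x := D 1%:M (to_mx x).
have f_hom x y : det22 x = 1 -> det22 y = 1 -> f (mmul x y) = f x + f y.
  move=> hx hy; have hxy : det22 (mmul x y) = 1 by rewrite det22M hx hy mulr1.
  have := Dco _ _ _ SL1 (SL_to _ hx) (SL_to _ hxy).
  have := Dinv _ _ _ (SL_to _ hx) SL1 (SL_to _ hy); rewrite mulmx1 -to_mxM /f => ->.
  by move/eqP; rewrite subr_eq0 => /eqP <-.
have hinv : SL2Z (invmx g1) by rewrite /SL2Z det_inv h1 invr1.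
have hq : SL2Z (invmx g1 *m g2) by rewrite /SL2Z det_mulmx hinv h2 mulr1.
have hu : g1 \in unitmx by rewrite unitmxE h1 unitr1.
have := Dinv _ _ _ h1 SL1 hq; rewrite mulmx1 mulmxA mulmxV // mul1mx => ->.
by have := sl2_hom_trivial f_hom (SL2Z_of_mx hq); rewrite /f to_mxK.
Qed.

Theorem mainTheorem15 :
  exists phi : 'M[int]_2 -> 'M[int]_2 -> rat,
    phi_spec phi /\
    forall psi : 'M[int]_2 -> 'M[int]_2 -> rat, phi_spec psi ->
      forall g1 g2, SL2Z g1 -> SL2Z g2 -> psi g1 g2 = phi g1 g2.
Proof.
exists phi0; split; first exact: phi0_spec.
move=> psi [_ [psi_inv psi_co]] g1 g2 h1 h2; have [_ [phi_inv phi_co]] := phi0_spec.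
apply/eqP; rewrite -subr_eq0; apply/eqP.
apply: (@invariant_cocycle_trivial (fun a b => psi a b - phi0 a b)) => // [h a b hh ha hb | a b c ha hb hc].
  by rewrite psi_inv ?phi_inv.
move: (psi_co a b c ha hb hc) (phi_co a b c ha hb hc).
move: (psi a b) (psi b c) (psi a c) (phi0 a b) (phi0 b c) (phi0 a c) => p1 p2 p3 q1 q2 q3.
by move: ((delta _ _ _)%:~R : rat) => d e1 e2; lra.
Qed.
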